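(* Let $f_1,\dots,f_k:\mathbb{R}^n\to\mathbb{R}$ be continuously differentiable, and let $x\in\mathbb{R}^n$. Suppose vectors $\nabla\widetilde{f}_1(x),\dots,\nabla\widetilde{f}_k(x)\in\mathbb{R}^n$ satisfy $\|\nabla\widetilde{f}_i(x)-\nabla f_i(x)\|_2\le\epsilon_i$ for given $\epsilon_i\ge0$, and $\nabla\widetilde{f}_i(x)\neq0$ for $i=1,\dots,k$. Let $\widehat{\alpha}_1,\dots,\widehat{\alpha}_k\ge0$ with $\sum_{i=1}^k\widehat{\alpha}_i=1$, put $q_u(x)=-\sum_{j=1}^k\widehat{\alpha}_j\nabla\widetilde{f}_j(x)$, and assume $q_u(x)\neq0$. Then for each $i\in\{1,\dots,k\}$ the condition \[ \frac{q_u(x)\cdot\bigl(-\nabla\widetilde{f}_i(x)\bigr)}{\|q_u(x)\|_2\,\|\nabla\widetilde{f}_i(x)\|_2}\ \ge\ \frac{\epsilon_i}{\|\nabla\widetilde{f}_i(x)\|_2} \] is equivalent to \[ \widehat{\alpha}_i\ \ge\ \frac{1}{\|\nabla\widetilde{f}_i(x)\|_2^2}\Bigl(\|q_u(x)\|_2\,\epsilon_i-\sum_{j=1,\,j\neq i}^k\widehat{\alpha}_j\bigl(\nabla\widetilde{f}_j(x)\cdot\nabla\widetilde{f}_i(x)\bigr)\Bigr). \] In particular, if the latter inequality holds for all $i=1,\dots,k$, then $q_u(x)$ is a descent direction for all objectives, i.e. $-\nabla f_i(x)\cdot q_u(x)\ge0$ for $i=1,\dots,k$.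
   Context: Here $\nabla\widetilde{f}_i(x)$ are inexact approximations of the exact gradients $\nabla f_i(x)$ of the objectives of the multiobjective problem $\min_{x\in\mathbb{R}^n}(f_1(x),\dots,f_k(x))$. In the paper the first condition is phrased as $\gamma_i\ge\varphi_i$, where $\gamma_i=\frac{\pi}{2}-\arccos\bigl(\frac{q_u(x)\cdot(-\nabla\widetilde{f}_i(x))}{\|q_u(x)\|_2\|\nabla\widetilde{f}_i(x)\|_2}\bigr)$ is the angle between $q_u(x)$ and the hyperplane orthogonal to the $i$-th gradient, and $\varphi_i=\arcsin\bigl(\epsilon_i/\|\nabla\widetilde{f}_i(x)\|_2\bigr)$ is the worst-case angular deviation between exact and inexact gradient (when $\epsilon_i\le\|\nabla\widetilde f_i(x)\|_2$); $\gamma_i\ge\varphi_i$ is the same as the displayed cosine inequality. *)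

From HB Require Import structures.
From mathcomp Require Import all_boot all_order all_algebra.
From mathcomp Require Import all_classical all_reals all_analysis.
Set Implicit Arguments. Unset Strict Implicit. Unset Printing Implicit Defensive.
Import Order.TTheory GRing.Theory Num.Theory.
Import numFieldNormedType.Exports.
Local Open Scope ring_scope.

Definition dot (R : realType) (n : nat) (u v : 'rV[R]_n) : R :=
  \sum_(j < n) u ord0 j * v ord0 j.

Definition norm2 (R : realType) (n : nat) (v : 'rV[R]_n) : R :=
  Num.sqrt (dot v v).

Definition is_gradient (R : realType) (n : nat) (f : 'rV[R]_n -> R)
    (x g : 'rV[R]_n) : Prop :=
  differentiable f x /\ forall v : 'rV[R]_n, 'd f x v = dot g v.

(* With D := q . (-g_i) and N := ||g_i||, both inequalities say ||q|| eps_i <= D: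
   the first after clearing the positive denominator ||q|| N, the second after
   multiplying by N^2, since expanding q = - sum_j alpha_j g_j gives
   D = alpha_i N^2 + sum_{j <> i} alpha_j (g_j . g_i).  For the descent claim,
   Cauchy-Schwarz and ||g_i - grad f_i(x)|| <= eps_i give
   -grad f_i(x) . q >= D - ||q|| eps_i >= 0. *)
From HB Require Import structures.
From mathcomp Require Import all_boot all_order all_algebra.
From mathcomp Require Import all_classical all_reals all_analysis.
From mathcomp Require Import ring lra.
Set Implicit Arguments. Unset Strict Implicit. Unset Printing Implicit Defensive.
Import Order.TTheory GRing.Theory Num.Theory.
Import numFieldNormedType.Exports.
Local Open Scope ring_scope.

Section EuclideanDot.
Variables (R : realType) (n : nat).
Implicit Types u v w : 'rV[R]_n.

Lemma dotC u v : dot u v = dot v u.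
Proof. by apply: eq_bigr => j _; rewrite mulrC. Qed.

Lemma dot0l v : dot 0 v = 0.
Proof. by apply: big1 => j _; rewrite mxE mul0r. Qed.

Lemma dotNl u v : dot (- u) v = - dot u v.
Proof. by rewrite /dot -sumrN; apply: eq_bigr => j _; rewrite mxE mulNr. Qed.

Lemma dotNr u v : dot u (- v) = - dot u v.
Proof. by rewrite dotC dotNl dotC. Qed.

Lemma dotBl u v w : dot (u - v) w = dot u w - dot v w.
Proof. by rewrite /dot -sumrB; apply: eq_bigr => j _; rewrite !mxE mulrBl. Qed.

Lemma dot_sumZl (k : nat) (a : 'I_k -> R) (g : 'I_k -> 'rV[R]_n) w :
  dot (\sum_(i < k) a i *: g i) w = \sum_(i < k) a i * dot (g i) w.
Proof.
rewrite /dot; under eq_bigr => j _ do rewrite summxE mulr_suml.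
rewrite exchange_big /=; apply: eq_bigr => i _; rewrite mulr_sumr.
by apply: eq_bigr => j _; rewrite mxE mulrA.
Qed.

Lemma dot_ge0 u : 0 <= dot u u.
Proof. by apply: sumr_ge0 => j _; rewrite -expr2 sqr_ge0. Qed.

Lemma norm2_sq u : norm2 u ^+ 2 = dot u u.
Proof. by rewrite sqr_sqrtr // dot_ge0. Qed.

Lemma norm2_ge0 u : 0 <= norm2 u.
Proof. exact: sqrtr_ge0. Qed.

Lemma norm20 : norm2 (0 : 'rV[R]_n) = 0.
Proof. by rewrite /norm2 dot0l sqrtr0. Qed.

Lemma norm2_eq0 u : (norm2 u == 0) = (u == 0).
Proof.
apply/idP/eqP => [|->]; last by rewrite norm20.
rewrite sqrtr_eq0 => uu_le0; apply/matrixP => i j; rewrite mxE (ord1 i).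
have /eqP : u ord0 j ^+ 2 = 0.
  apply: (psumr_eq0P (P := predT) (F := fun j => u ord0 j ^+ 2)) => //.
    by move=> l _; rewrite sqr_ge0.
  by apply/eqP; rewrite eq_le uu_le0 dot_ge0.
by rewrite sqrf_eq0 => /eqP.
Qed.

Lemma norm2_gt0 u : u != 0 -> 0 < norm2 u.
Proof. by rewrite -norm2_eq0 lt_def norm2_ge0 andbT. Qed.

(* Cauchy-Schwarz, lower half: expand ||b u + a v||^2 >= 0 with a = ||u||, b = ||v||. *)
Lemma Nnorm2M_le_dot u v : - (norm2 u * norm2 v) <= dot u v.
Proof.
have [->|u_neq0] := eqVneq u 0; first by rewrite norm20 dot0l mul0r oppr0.
have [->|v_neq0] := eqVneq v 0; first by rewrite norm20 dotC dot0l mulr0 oppr0.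
have ab_gt0 : 0 < norm2 u * norm2 v by rewrite mulr_gt0 ?norm2_gt0.
set a := norm2 u in ab_gt0 *; set b := norm2 v in ab_gt0 *.
have expand : dot (b *: u + a *: v) (b *: u + a *: v)
    = b ^+ 2 * dot u u + 2 * (a * b) * dot u v + a ^+ 2 * dot v v.
  rewrite /dot !mulr_sumr -!big_split /=; apply: eq_bigr => j _.
  by rewrite !mxE; ring.
have : 0 <= 2 * (a * b) * (a * b + dot u v).
  have -> : 2 * (a * b) * (a * b + dot u v) = dot (b *: u + a *: v) (b *: u + a *: v).
    by rewrite expand -!norm2_sq -/a -/b; ring.
  exact: dot_ge0.
by rewrite pmulr_rge0 ?(mulr_gt0 _ ab_gt0) //; lra.
Qed.

Lemma dot_Nsum_bigD1 (k : nat) (a : 'I_k -> R) (g : 'I_k -> 'rV[R]_n) i :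
  dot (- \sum_(j < k) a j *: g j) (- g i)
  = a i * norm2 (g i) ^+ 2 + \sum_(j < k | j != i) a j * dot (g j) (g i).
Proof. by rewrite dotNl dotNr opprK dot_sumZl (bigD1 i) //= norm2_sq. Qed.

Lemma descent_of_inexact_gradient (g h q : 'rV[R]_n) (e : R) :
  norm2 (g - h) <= e -> norm2 q * e <= dot q (- g) -> 0 <= - dot h q.
Proof.
move=> gh_le qe_le; have cs := Nnorm2M_le_dot (g - h) q.
have : norm2 (g - h) * norm2 q <= e * norm2 q by rewrite ler_wpM2r ?norm2_ge0.
by rewrite dotBl in cs; rewrite dotNr dotC in qe_le; lra.
Qed.

End EuclideanDot.

Lemma ler_angle_dot (R : realFieldType) (Q N e D : R) :
  0 < Q -> 0 < N -> e / N <= D / (Q * N) <-> Q * e <= D.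
Proof.
move=> Q_gt0 N_gt0.
have -> : e / N = Q * e / (Q * N) by field; rewrite !gt_eqF.
by rewrite ler_pM2r ?invr_gt0 ?mulr_gt0.
Qed.

Lemma ler_weight_dot (R : realFieldType) (Q N e a S : R) :
  0 < N -> (N ^+ 2)^-1 * (Q * e - S) <= a <-> Q * e <= a * N ^+ 2 + S.
Proof.
move=> N_gt0; rewrite mulrC ler_pdivrMr ?exprn_gt0 //.
by split => ?; lra.
Qed.

Theorem lemma2 (R : realType) (n k : nat)
    (f : 'I_k -> 'rV[R]_n -> R) (G : 'I_k -> 'rV[R]_n -> 'rV[R]_n)
    (x : 'rV[R]_n) (gt : 'I_k -> 'rV[R]_n) (eps alpha : 'I_k -> R) :
  (* f_i continuously differentiable with gradient G i *)
  (forall i y, is_gradient (f i) y (G i y)) ->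
  (forall i, continuous (G i)) ->
  (* inexact gradients *)
  (forall i, 0 <= eps i) ->
  (forall i, norm2 (gt i - G i x) <= eps i) ->
  (forall i, gt i != 0) ->
  (forall i, 0 <= alpha i) ->
  \sum_(i < k) alpha i = 1 ->
  let q := - \sum_(j < k) alpha j *: gt j in
  q != 0 ->
  (forall i,
     dot q (- gt i) / (norm2 q * norm2 (gt i)) >= eps i / norm2 (gt i)
     <->
     alpha i >= (norm2 (gt i) ^+ 2)^-1 *
                (norm2 q * eps i
                 - \sum_(j < k | j != i) alpha j * dot (gt j) (gt i)))
  /\
  ((forall i, alpha i >= (norm2 (gt i) ^+ 2)^-1 *
                (norm2 q * eps i
                 - \sum_(j < k | j != i) alpha j * dot (gt j) (gt i))) ->
   forall i, 0 <= - dot (G i x) q).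
Proof.
move=> _ _ _ gt_close gt_neq0 _ _ q q_neq0.
split=> [i | weights_ok i].
  by rewrite ler_angle_dot ?norm2_gt0 // ler_weight_dot ?norm2_gt0 // dot_Nsum_bigD1.
apply: (descent_of_inexact_gradient (gt_close i)).
by rewrite dot_Nsum_bigD1 -ler_weight_dot ?norm2_gt0.
Qed.
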